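(* Let $\mathcal{A}$ be an Ershov $\mathcal{C}$-algebra. If $\mathcal{A}$ is weakly equationally Noetherian, then for every set of constants $\{c_j \mid j \in J\} \subseteq \mathcal{C}$ that is not bounded above, there exists $c \in \mathcal{C}$ such that the system of equations in one variable $x$ $$\{ x \wedge c_j = 0 \mid j \in J\}$$ is equivalent over $\mathcal{A}$ to the equation $x \leq c$.
   Context: An Ershov algebra is a structure $\langle A; \vee, \wedge, \setminus, 0\rangle$ such that $\langle A;\vee,\wedge\rangle$ is a distributive lattice with least element $0$, and $b \setminus a$ is the relative complement: the unique $z$ with $z \wedge a = 0$ and $z \vee a = a \vee b$. An Ershov $\mathcal{C}$-algebra is an Ershov algebra $\mathcal{A}$ together with a distinguished subalgebra $\mathcal{C}$ whose elements are added as constant symbols; $\mathcal{L}$ is the language $\{\vee,\wedge,\setminus,0\}$ plus these constants. An equation is $t(\bar x)=s(\bar x)$ with $t,s$ terms of $\mathcal{L}$; $t\le s$ means the equation $t\vee s = s$. Two systems of equations are equivalent over $\mathcal{A}$ if they have the same solution set. $\mathcal{A}$ is weakly equationally Noetherian if every system of equations (possibly infinite) in finitely many variables is equivalent over $\mathcal{A}$ to some finite system of equations of $\mathcal{L}$. A set is upper-unbounded if it has no upper bound in $\mathcal{A}$. *)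

From Stdlib Require List.
(* An Ershov algebra is modelled by MathComp's
   cbDistrLatticeType: a distributive lattice with bottom \bot (= 0) and
   a difference operation x `\` y satisfying
   (x `\` y) `&` y = \bot and (x `\` y) `|` y = x `|` y (relative complement). *)
From mathcomp Require Import all_boot all_order.
Set Implicit Arguments. Unset Strict Implicit. Unset Printing Implicit Defensive.
Import Order.Theory.
Local Open Scope order_scope.

Definition is_subalgebra (disp : Order.disp_t) (A : cbDistrLatticeType disp)
  (C : A -> Prop) : Prop :=
  [/\ C \bot,
      (forall x y, C x -> C y -> C (x `|` y)),
      (forall x y, C x -> C y -> C (x `&` y)) &
      (forall x y, C x -> C y -> C (x `\` y))].

Inductive term (K V : Type) : Type :=
  | TVar of V
  | TConst of K
  | TZero
  | TJoin of term K V & term K V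
  | TMeet of term K V & term K V
  | TDiff of term K V & term K V.

Arguments TZero {K V}.

Definition Lconst (disp : Order.disp_t) (A : cbDistrLatticeType disp)
  (C : A -> Prop) : Type := {c : A | C c}.

Fixpoint eval_term (disp : Order.disp_t) (A : cbDistrLatticeType disp)
  (C : A -> Prop) (V : Type) (s : V -> A) (t : term (Lconst C) V) : A :=
  match t with
  | TVar v => s v
  | TConst k => proj1_sig k
  | TZero => \bot
  | TJoin t1 t2 => eval_term s t1 `|` eval_term s t2
  | TMeet t1 t2 => eval_term s t1 `&` eval_term s t2
  | TDiff t1 t2 => eval_term s t1 `\` eval_term s t2
  end.

Definition equation (disp : Order.disp_t) (A : cbDistrLatticeType disp)
  (C : A -> Prop) (n : nat) : Type :=
  (term (Lconst C) 'I_n * term (Lconst C) 'I_n)%type.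

Definition system (disp : Order.disp_t) (A : cbDistrLatticeType disp)
  (C : A -> Prop) (n : nat) : Type := equation C n -> Prop.

Definition is_solution (disp : Order.disp_t) (A : cbDistrLatticeType disp)
  (C : A -> Prop) (n : nat) (S : system C n) (s : 'I_n -> A) : Prop :=
  forall e, S e -> eval_term s e.1 = eval_term s e.2.

Definition equivalent_systems (disp : Order.disp_t) (A : cbDistrLatticeType disp)
  (C : A -> Prop) (n : nat) (S1 S2 : system C n) : Prop :=
  forall s : 'I_n -> A, is_solution S1 s <-> is_solution S2 s.

Definition weakly_equationally_noetherian (disp : Order.disp_t)
  (A : cbDistrLatticeType disp) (C : A -> Prop) : Prop :=
  forall (n : nat) (S : system C n),
    exists F : seq (equation C n),
      equivalent_systems S (fun e => Stdlib.Lists.List.In e F).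

Definition le_eq (K V : Type) (t s : term K V) : (term K V * term K V)%type :=
  (TJoin t s, s).

From mathcomp Require Import all_boot all_order.
From Stdlib Require Import Classical.
Import Order.Theory.
Set Implicit Arguments. Unset Strict Implicit. Unset Printing Implicit Defensive.
Local Open Scope order_scope.

(* Replace the system by an equivalent finite one F and let K be the join of
   the constants occurring in F.  Meeting with K and subtracting K are
   endomorphisms of the Ershov algebra, so every equation of F splits into a
   part below K and a part outside K.  Outside K the constants vanish and a
   one-variable term evaluates to x or to 0, as in the two-element algebra.
   If F contains an equation whose two sides differ there, every solution
   lies below K; otherwise every c_j \ K is a solution, which forces c_j <= K
   and contradicts unboundedness.  Below K, with 0 a solution, an equation
   t = s holds at x iff x is disjoint from the symmetric difference of t(K)
   and s(K), so the solutions are exactly the x below K minus all these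
   symmetric differences. *)

Section ErshovAlgebra.
Variables (disp : Order.disp_t) (A : cbDistrLatticeType disp).
Implicit Types a b x K : A.

Lemma eq_meetr_diffr a b K : a `&` K = b `&` K -> a `\` K = b `\` K -> a = b.
Proof. by move=> eqI eqB; rewrite -(joinIB K a) -(joinIB K b) eqI eqB. Qed.

Definition symdiff a b := (a `\` b) `|` (b `\` a).

Lemma meet_eq_symdiff x a b : x `&` a = x `&` b <-> x `&` symdiff a b = \bot.
Proof.
rewrite /symdiff meetUr !meetxB; split => [eqx | /eqP].
  by apply/eqP; rewrite join_eq0 !diff_eq0 eqx leIr -eqx leIr.
rewrite join_eq0 !diff_eq0 => /andP[le_ab le_ba].
by apply/eqP; rewrite eq_le !lexI !leIl le_ab le_ba.
Qed.

End ErshovAlgebra.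

Section Terms.
Variables (disp : Order.disp_t) (A : cbDistrLatticeType disp) (C : A -> Prop).

Definition const_val (c : Lconst C) : A := proj1_sig c.

Fixpoint interp {V : Type} (k : Lconst C -> A) (s : V -> A)
    (t : term (Lconst C) V) : A :=
  match t with
  | TVar v => s v
  | TConst c => k c
  | TZero => \bot
  | TJoin t1 t2 => interp k s t1 `|` interp k s t2
  | TMeet t1 t2 => interp k s t1 `&` interp k s t2
  | TDiff t1 t2 => interp k s t1 `\` interp k s t2
  end.

Lemma eval_term_interp V (s : V -> A) t : eval_term s t = interp const_val s t.
Proof. by elim: t => //= t1 -> t2 ->. Qed.

Lemma eq_interp V k k' (s s' : V -> A) t :
  k =1 k' -> s =1 s' -> interp k s t = interp k' s' t.
Proof. by move=> eqk eqs; elim: t => //= t1 -> t2 ->. Qed.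

Lemma interp_morph V (phi : A -> A) k (s : V -> A) t :
  {morph phi : x y / x `|` y} -> {morph phi : x y / x `&` y} ->
  {morph phi : x y / x `\` y} -> phi \bot = \bot ->
  phi (interp k s t) = interp (fun c => phi (k c)) (fun v => phi (s v)) t.
Proof. by move=> phiU phiI phiB phi0; elim: t => //= t1 <- t2 <-. Qed.

Lemma interp_meetr V k (s : V -> A) t a :
  interp k s t `&` a = interp (fun c => k c `&` a) (fun v => s v `&` a) t.
Proof.
apply: (interp_morph (phi := fun x => x `&` a)) => [x y|x y|x y|]; last exact: meet0x.
- exact: meetUl.
- by rewrite meetACA meetxx.
- have /eqP xa_a : (x `&` a) `\` a == \bot by rewrite diff_eq0 leIr.
  by rewrite meetBx diffxI xa_a joinx0.
Qed.

Lemma interp_diffr V k (s : V -> A) t a :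
  interp k s t `\` a = interp (fun c => k c `\` a) (fun v => s v `\` a) t.
Proof.
apply: (interp_morph (phi := fun x => x `\` a)) => [x y|x y|x y|]; last exact: diff0x.
- exact: diffUx.
- exact: diffIx.
- by rewrite diffBx [in RHS]diffBx diffKU joinC.
Qed.

Lemma interp_subalgebra V (s : V -> A) t :
  is_subalgebra C -> (forall v, C (s v)) -> C (interp const_val s t).
Proof.
case=> C0 CU CI CB Cs.
by elim: t => //= [c|t1 ? t2 ?|t1 ? t2 ?|t1 ? t2 ?]; [exact: proj2_sig | auto..].
Qed.

Fixpoint const_bound {V : Type} (t : term (Lconst C) V) : A :=
  match t with
  | TConst c => const_val c
  | TJoin t1 t2 | TMeet t1 t2 | TDiff t1 t2 => const_bound t1 `|` const_bound t2
  | _ => \bot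
  end.

Lemma const_bound_subalgebra V (t : term (Lconst C) V) :
  is_subalgebra C -> C (const_bound t).
Proof.
by case=> C0 CU CI CB; elim: t => //= [c|*|*|*]; [exact: proj2_sig | auto..].
Qed.

(* The value of [t] in the two-element algebra, with every variable true and
   every constant false. *)
Fixpoint bool_eval {V : Type} (t : term (Lconst C) V) : bool :=
  match t with
  | TVar _ => true
  | TConst _ | TZero => false
  | TJoin t1 t2 => bool_eval t1 || bool_eval t2
  | TMeet t1 t2 => bool_eval t1 && bool_eval t2
  | TDiff t1 t2 => bool_eval t1 && ~~ bool_eval t2
  end.

Lemma interp_const_free V z (t : term (Lconst C) V) :
  interp (fun _ => \bot) (fun _ => z) t = if bool_eval t then z else \bot.
Proof.
elim: t => //= t1 -> t2 ->; case: (bool_eval t1); case: (bool_eval t2) => /=;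
  by rewrite ?joinxx ?joinx0 ?join0x ?meetxx ?meetx0 ?meet0x ?diffxx ?diffx0 ?diff0x.
Qed.

Lemma interp_constants_below V (s : V -> A) (t : term (Lconst C) V) K :
  const_bound t <= K ->
  interp (fun c => const_val c `\` K) s t = interp (fun _ => \bot) s t.
Proof.
elim: t => //= [c|t1 IH1 t2 IH2|t1 IH1 t2 IH2|t1 IH1 t2 IH2].
  by move=> le_cK; apply/eqP; rewrite diff_eq0.
all: by rewrite leUx => /andP[/IH1-> /IH2->].
Qed.

Lemma interp_diff_const_bound V z (t : term (Lconst C) V) K :
  const_bound t <= K ->
  interp const_val (fun _ => z) t `\` K = if bool_eval t then z `\` K else \bot.
Proof.
by move=> le_tK; rewrite interp_diffr interp_constants_below // interp_const_free.
Qed.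

Definition eval1 (t : term (Lconst C) 'I_1) (x : A) : A :=
  interp const_val (fun _ => x) t.

Lemma eval_term1 (s : 'I_1 -> A) t : eval_term s t = eval1 t (s ord0).
Proof. by rewrite eval_term_interp; apply: eq_interp => // i; rewrite (ord1 i). Qed.

Lemma eval1_subalgebra t x : is_subalgebra C -> C x -> C (eval1 t x).
Proof. by move=> HC Cx; apply: interp_subalgebra. Qed.

Lemma eval1_meet_var t x y : x <= y -> eval1 t x `&` x = eval1 t y `&` x.
Proof.
move=> le_xy; rewrite /eval1 !interp_meetr; apply: eq_interp => // _.
by rewrite meetxx meet_r.
Qed.

Lemma eval1_diff_var t x : eval1 t x `\` x = eval1 t \bot `\` x.
Proof.
by rewrite /eval1 !interp_diffr; apply: eq_interp => // _; rewrite diffxx diff0x.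
Qed.

Lemma eval1_meetr t x K : eval1 t x `&` K = eval1 t (x `&` K) `&` K.
Proof.
by rewrite /eval1 !interp_meetr; apply: eq_interp => // _; rewrite -meetA meetxx.
Qed.

Lemma eval1_eq_meet t1 t2 x y : x <= y -> eval1 t1 \bot = eval1 t2 \bot ->
  eval1 t1 x = eval1 t2 x <-> x `&` eval1 t1 y = x `&` eval1 t2 y.
Proof.
move=> le_xy eq0; rewrite ![x `&` _]meetC -(eval1_meet_var t1 le_xy).
rewrite -(eval1_meet_var t2 le_xy); split=> [-> // | eqI].
by apply: (eq_meetr_diffr eqI); rewrite !eval1_diff_var eq0.
Qed.

Definition solves (F : seq (equation C 1)) (x : A) : Prop :=
  forall e, List.In e F -> eval1 e.1 x = eval1 e.2 x.

Lemma is_solution_In F (s : 'I_1 -> A) :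
  is_solution (fun e => List.In e F) s <-> solves F (s ord0).
Proof. by split=> sol e /sol; rewrite !eval_term1. Qed.

Definition sys_const_bound (F : seq (equation C 1)) : A :=
  foldr (fun e K => const_bound e.1 `|` const_bound e.2 `|` K) \bot F.

Lemma sys_const_bound_ge F e : List.In e F ->
  const_bound e.1 `|` const_bound e.2 <= sys_const_bound F.
Proof.
elim: F => [//|e' F IH] /= [<- | /IH le_eF]; first exact: leUl.
exact: le_trans le_eF (leUr _ _).
Qed.

Lemma sys_const_bound_subalgebra F : is_subalgebra C -> C (sys_const_bound F).
Proof.
move=> HC; have [C0 CU _ _] := HC.
by elim: F => //= e F CF; do 2?apply: (CU) => //; exact: const_bound_subalgebra.
Qed.

Definition defect (K : A) (e : equation C 1) : A :=
  symdiff (eval1 e.1 K) (eval1 e.2 K).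

Definition solution_bound (K : A) (F : seq (equation C 1)) : A :=
  foldr (fun e d => d `\` defect K e) K F.

Lemma le_solution_bound K F x : x <= solution_bound K F <->
  x <= K /\ forall e, List.In e F -> x `&` defect K e = \bot.
Proof.
elim: F => [|e F IH] /=; first by split=> [le_xK | []].
rewrite leBRL; split=> [/andP[/IH[le_xK disj] /eqP disj_e] | [le_xK disj]].
  by split=> // e' [<- // | /disj].
apply/andP; split; last by apply/eqP/disj; left.
by apply/IH; split=> // e' Fe'; apply: disj; right.
Qed.

Lemma solution_bound_subalgebra K F :
  is_subalgebra C -> C K -> C (solution_bound K F).
Proof.
move=> HC CK; have [_ CU _ CB] := HC.
by elim: F => //= e F CF; apply: (CB) => //; apply: CU; apply: (CB);
  exact: eval1_subalgebra.
Qed.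

Lemma solves_iff_le_solution_bound F K : solves F \bot ->
  (forall x, solves F x -> x <= K) ->
  forall x, solves F x <-> x <= solution_bound K F.
Proof.
move=> sol0 bounded x; rewrite le_solution_bound.
split=> [solx | [le_xK disj] e Fe].
  split=> [|e Fe]; first exact: bounded.
  by apply/meet_eq_symdiff/(eval1_eq_meet (bounded _ solx) (sol0 _ Fe))/solx.
exact/(eval1_eq_meet le_xK (sol0 _ Fe))/meet_eq_symdiff/disj.
Qed.

Lemma solves_disjoint F z : solves F \bot ->
  (forall e, List.In e F -> bool_eval e.1 = bool_eval e.2) ->
  z `&` sys_const_bound F = \bot -> solves F z.
Proof.
move=> sol0 same_bool disj e Fe.
have /sys_const_bound_ge := Fe; rewrite leUx => /andP[le1 le2].
apply: (eq_meetr_diffr (K := sys_const_bound F)).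
  by rewrite eval1_meetr [RHS]eval1_meetr disj sol0.
by rewrite /eval1 !interp_diff_const_bound // same_bool.
Qed.

Lemma solves_le_sys_const_bound F e x : List.In e F ->
  bool_eval e.1 != bool_eval e.2 -> solves F x -> x <= sys_const_bound F.
Proof.
move=> Fe neq sol; have := sol _ Fe.
have /sys_const_bound_ge := Fe; rewrite leUx => /andP[le1 le2].
move/(congr1 (fun a => a `\` sys_const_bound F)).
rewrite /eval1 !interp_diff_const_bound //.
case: (bool_eval e.1) (bool_eval e.2) neq => -[] //= _ /eqP;
  by rewrite ?diff_eq0 // eq_sym diff_eq0.
Qed.

Lemma solves_bounded_of_unbounded F (J : Type) (c : J -> A) :
  (forall x, solves F x <-> forall j, x `&` c j = \bot) ->
  ~ (exists u, forall j, c j <= u) ->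
  forall x, solves F x -> x <= sys_const_bound F.
Proof.
move=> solF unbounded x solx.
have sol0 : solves F \bot by apply/solF => j; rewrite meet0x.
have [[e Fe neq] | same_bool] :=
  classic (exists2 e, List.In e F & bool_eval e.1 != bool_eval e.2).
  exact: solves_le_sys_const_bound Fe neq solx.
case: unbounded; exists (sys_const_bound F) => j.
have /solF/(_ j) : solves F (c j `\` sys_const_bound F).
  apply: solves_disjoint sol0 _ (diffIK _ _) => e Fe.
  by apply/eqP; apply: contraT => neq; case: same_bool; exists e.
by rewrite meetC meetxB meetxx => /eqP; rewrite diff_eq0.
Qed.

Lemma is_solution_disjoint (J : Type) (c : J -> A) (HcC : forall j, C (c j))
    (s : 'I_1 -> A) :
  is_solution (fun e : equation C 1 =>
      exists j, e = (TMeet (TVar _ ord0) (TConst _ (exist C (c j) (HcC j))), TZero)) s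
  <-> forall j, s ord0 `&` c j = \bot.
Proof.
by split=> [sol j | disj _ [j ->]]; [exact: sol (ex_intro _ j erefl) | exact: disj].
Qed.

Lemma is_solution_le_eq d (Cd : C d) (s : 'I_1 -> A) :
  is_solution (fun e : equation C 1 =>
      e = le_eq (TVar _ ord0) (TConst _ (exist C d Cd))) s
  <-> s ord0 <= d.
Proof. by split=> [/(_ _ erefl) /join_idPr | /join_idPr le_d _ ->]. Qed.

End Terms.

Theorem mainTheorem6 (disp : Order.disp_t) (A : cbDistrLatticeType disp)
  (C : A -> Prop) (HC : is_subalgebra C)
  (J : Type) (c : J -> A) (HcC : forall j, C (c j)) :
  weakly_equationally_noetherian C ->
  ~ (exists u : A, forall j, c j <= u) ->
  exists (d : A) (Hd : C d),
    equivalent_systems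
      (fun e : equation C 1 =>
         exists j, e = (TMeet (TVar _ ord0) (TConst _ (exist C (c j) (HcC j))), TZero))
      (fun e : equation C 1 =>
         e = le_eq (TVar _ ord0) (TConst _ (exist C d Hd))).
Proof.
move=> noetherian unbounded.
set S := (fun e : equation C 1 => exists j, _).
have [F equivF] := noetherian 1 S.
have solF x : solves F x <-> forall j, x `&` c j = \bot.
  rewrite -(is_solution_In F (fun _ => x)) -(equivF (fun _ => x)).
  exact: is_solution_disjoint.
have sol0 : solves F \bot by apply/solF => j; rewrite meet0x.
have CK := sys_const_bound_subalgebra F HC.
exists (solution_bound (sys_const_bound F) F), (solution_bound_subalgebra F HC CK).
move=> s; rewrite is_solution_disjoint is_solution_le_eq -solF.
exact: solves_iff_le_solution_bound sol0 (solves_bounded_of_unbounded solF unbounded) _.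
Qed.
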